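(* Let $\sigma$ have substitution matrix $M_\sigma=\begin{pmatrix}A&C\\0&B\end{pmatrix}$ with $A,B$ primitive, $C\neq0$ and $\rho(A)>\rho(B)>1$, and let $\Omega$ be the tiling space of the tile substitution $\mathcal G$ associated with $\sigma$. Put $\alpha=\log\rho(B)/\log\rho(A)$. Then there exists $K>0$ such that for every $\mathcal T\in\Omega$ and every $t>0$, $$N_{\mathcal T}(\mathcal B,t)\le K\,t^\alpha .$$
   Context: $\mathcal A=\{1,\dots,N\}$, $\sigma:\mathcal A\to\mathcal A^+$ a substitution; $M_\sigma$ has $(a,b)$ entry equal to the number of occurrences of $a$ in $\sigma(b)$; $\mathcal B$ is the set of letters indexing the block $B$. Let $\xi_1,\dots,\xi_N>0$ satisfy $|\sigma^k(i)|/(\xi_i\rho(A)^k)\to1$ as $k\to\infty$ (they form a left eigenvector of $M_\sigma$ for $\lambda:=\rho(A)$). Associated tile substitution: for $a\in\mathcal A$, the prototile $I_a$ is the interval of length $\xi_a$ centered at $0$, labeled $a$; for $v\in\mathcal A$ with $\sigma(v)=w_1\cdots w_m$, $\mathcal G(I_v)$ is the patch of consecutive translates of $I_{w_1},\dots,I_{w_m}$ (left to right) exactly subdividing $\lambda I_v$; $\mathcal G(I+u)=\mathcal G(I)+\lambda u$. The tiling space $\Omega$ is the set of tilings of $\mathbb R$ by translates of the $I_a$ all of whose finite subpatches are subpatches of some $\mathcal G^n(I_a)+u$. For $\mathcal T\in\Omega$ and $t>0$, $N_{\mathcal T}(\mathcal B,t)$ is the number of tiles of $\mathcal T$ that are translates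 of some $I_b$, $b\in\mathcal B$, and are contained in $[0,t]$. *)

From Stdlib Require Import Reals List Arith.
Import ListNotations.
Open Scope R_scope.

(* Alphabet {0,...,N-1}; a substitution is sigma : nat -> list nat, only
   relevant on letters < N. *)

Definition sub_wf (N : nat) (sigma : nat -> list nat) : Prop :=
  forall a, (a < N)%nat -> sigma a <> [] /\ Forall (fun b => (b < N)%nat) (sigma a).

Definition submat (sigma : nat -> list nat) (a b : nat) : nat :=
  count_occ Nat.eq_dec (sigma b) a.

Definition nsum (lo hi : nat) (f : nat -> nat) : nat :=
  fold_right (fun l acc => (f l + acc)%nat) 0%nat (seq lo (hi - lo)).

Fixpoint blkpow (M : nat -> nat -> nat) (lo hi k : nat) (i j : nat) : nat :=
  match k with
  | O => if Nat.eqb i j then 1%nat else 0%nat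
  | S k' => nsum lo hi (fun l => (blkpow M lo hi k' i l * M l j)%nat)
  end.

Definition blk_primitive (M : nat -> nat -> nat) (lo hi : nat) : Prop :=
  (lo < hi)%nat /\
  exists k, (0 < k)%nat /\
    forall i j, (lo <= i < hi)%nat -> (lo <= j < hi)%nat -> (0 < blkpow M lo hi k i j)%nat.

(* Sum of the entries of the k-th power of the block (the entrywise l1-norm,
   which for a nonnegative matrix is a matrix norm). *)
Definition blk_norm (M : nat -> nat -> nat) (lo hi k : nat) : nat :=
  nsum lo hi (fun i => nsum lo hi (fun j => blkpow M lo hi k i j)).

(* Spectral radius, via Gelfand's formula rho = lim_k ||M^k||^(1/k). *)
Definition blk_spectral_radius (M : nat -> nat -> nat) (lo hi : nat) (r : R) : Prop :=
  Un_cv (fun k => Rpower (INR (blk_norm M lo hi (S k))) (/ INR (S k))) r.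

Definition subst_word (sigma : nat -> list nat) (w : list nat) : list nat :=
  flat_map sigma w.
Definition subst_iter (sigma : nat -> list nat) (k : nat) (w : list nat) : list nat :=
  Nat.iter k (subst_word sigma) w.

(* Tiles: (label a, translation vector u); the tile is I_a + u, i.e. the
   interval [u - xi a / 2, u + xi a / 2] labelled a. *)
Definition tile : Type := (nat * R)%type.
Definition tile_left (xi : nat -> R) (T : tile) : R := snd T - xi (fst T) / 2.
Definition tile_right (xi : nat -> R) (T : tile) : R := snd T + xi (fst T) / 2.

Fixpoint lay (xi : nat -> R) (x : R) (w : list nat) : list tile :=
  match w with
  | [] => []
  | a :: w' => (a, x + xi a / 2) :: lay xi (x + xi a) w'
  end.

(* Tile substitution: G(I_v + u) = G(I_v) + lam u, where G(I_v) consists of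
   consecutive translates of I_{w_1},...,I_{w_m} (sigma v = w_1...w_m)
   subdividing lam I_v. *)
Definition G_tile (sigma : nat -> list nat) (xi : nat -> R) (lam : R) (T : tile) : list tile :=
  lay xi (lam * snd T - lam * xi (fst T) / 2) (sigma (fst T)).
Definition G_patch (sigma : nat -> list nat) (xi : nat -> R) (lam : R) (P : list tile) : list tile :=
  flat_map (G_tile sigma xi lam) P.
Definition G_iter (sigma : nat -> list nat) (xi : nat -> R) (lam : R) (n : nat) (P : list tile) : list tile :=
  Nat.iter n (G_patch sigma xi lam) P.
Definition translate (u : R) (P : list tile) : list tile :=
  map (fun T => (fst T, snd T + u)) P.

Definition is_tiling (N : nat) (xi : nat -> R) (Tg : tile -> Prop) : Prop :=
  (forall T, Tg T -> (fst T < N)%nat) /\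
  (forall x, exists T, Tg T /\ tile_left xi T <= x <= tile_right xi T) /\
  (forall T1 T2, Tg T1 -> Tg T2 -> T1 <> T2 ->
     forall x, ~ (tile_left xi T1 < x < tile_right xi T1 /\
                  tile_left xi T2 < x < tile_right xi T2)).

Definition in_tiling_space (N : nat) (sigma : nat -> list nat) (xi : nat -> R) (lam : R)
  (Tg : tile -> Prop) : Prop :=
  is_tiling N xi Tg /\
  forall P : list tile, (forall T, In T P -> Tg T) ->
    exists a n u, (a < N)%nat /\
      forall T, In T P -> In T (translate u (G_iter sigma xi lam n [(a, 0)])).

(* N_T(B,t) <= bound, where B = {p,...,N-1}: every finite collection of
   (distinct) tiles of T with label in B contained in [0,t] has at most
   'bound' elements. *)
Definition count_B_le (N p : nat) (xi : nat -> R) (Tg : tile -> Prop) (t bound : R) : Prop :=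
  forall l : list tile, NoDup l ->
    (forall T, In T l -> Tg T /\ (p <= fst T < N)%nat /\
                         0 <= tile_left xi T /\ tile_right xi T <= t) ->
    INR (length l) <= bound.

From Stdlib Require Import Reals List Arith Lia Lra.
Import ListNotations.

(* A level-m supertile sigma^m(c) has length rhoA^m xi_c.  Since A-letters never produce
   B-letters, its B-tiles are counted by the B-block of the m-th power of the substitution
   matrix; by primitivity of B these block norms are supermultiplicative (with a gap k), so
   Gelfand's formula bounds them by rhoB^(m+k).  For a window [0, t] choose m with
   rhoA^m xi_min <= t < rhoA^(m+1) xi_min: every finite patch of the tiling lies in some
   G^n(I_a) + u, which is either a single supertile of level n <= m or a concatenation of
   level-(m+1) supertiles, each longer than t, of which the window meets at most two; either
   way it contains at most 2 rhoB^(m+1+k) <= K t^alpha B-tiles. *)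

Local Open Scope nat_scope.

Fixpoint wsum (f : nat -> nat) (s : list nat) : nat :=
  match s with [] => 0 | x :: s' => f x + wsum f s' end.

Lemma nsum_wsum lo hi f : nsum lo hi f = wsum f (seq lo (hi - lo)).
Proof. unfold nsum; induction (seq lo (hi - lo)); cbn; congruence. Qed.

Lemma wsum_app f u v : wsum f (u ++ v) = wsum f u + wsum f v.
Proof. induction u as [|x u IH]; cbn; [|rewrite IH]; lia. Qed.

Lemma wsum_ext f g s : (forall x, In x s -> f x = g x) -> wsum f s = wsum g s.
Proof. induction s as [|x s IH]; intros H; cbn; [|rewrite H, IH]; auto with datatypes. Qed.

Lemma wsum_le f g s : (forall x, In x s -> f x <= g x) -> wsum f s <= wsum g s.
Proof.
  induction s as [|x s IH]; intros H; cbn; [lia|].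
  apply Nat.add_le_mono; [apply H | apply IH]; auto with datatypes.
Qed.

Lemma wsum_In_le f s x : In x s -> f x <= wsum f s.
Proof. induction s as [|y s IH]; cbn; [tauto|]. intros [<-|Hx]; [|specialize (IH Hx)]; lia. Qed.

Lemma wsum_add f g s : wsum (fun x => f x + g x) s = wsum f s + wsum g s.
Proof. induction s as [|x s IH]; cbn; [|rewrite IH]; lia. Qed.

Lemma wsum_mul_l c f s : wsum (fun x => c * f x) s = c * wsum f s.
Proof. induction s as [|x s IH]; cbn; [|rewrite IH]; lia. Qed.

Lemma wsum_swap (f : nat -> nat -> nat) s s' :
  wsum (fun i => wsum (f i) s') s = wsum (fun j => wsum (fun i => f i j) s) s'.
Proof.
  induction s as [|x s IH]; cbn.
  - induction s' as [|y s' IH']; cbn; lia.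
  - rewrite IH, <- wsum_add. reflexivity.
Qed.

Lemma nsum_swap lo hi lo' hi' (f : nat -> nat -> nat) :
  nsum lo hi (fun i => nsum lo' hi' (f i)) = nsum lo' hi' (fun j => nsum lo hi (fun i => f i j)).
Proof.
  rewrite !nsum_wsum.
  erewrite wsum_ext by (intros; apply nsum_wsum); rewrite wsum_swap.
  apply wsum_ext; intros; symmetry; apply nsum_wsum.
Qed.

Lemma wsum_indicator c v s :
  wsum (fun l => if Nat.eq_dec c l then v else 0) s = count_occ Nat.eq_dec s c * v.
Proof.
  induction s as [|x s IH]; cbn; [lia|].
  rewrite IH; destruct (Nat.eq_dec c x), (Nat.eq_dec x c); subst; cbn; lia || congruence.
Qed.

Lemma wsum_count_occ f w s : NoDup s ->
  (forall c, In c w -> ~ In c s -> f c = 0) ->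
  wsum f w = wsum (fun l => count_occ Nat.eq_dec w l * f l) s.
Proof.
  intros Hs; induction w as [|c w IH]; intros Hf; cbn.
  - induction s as [|x s IHs]; cbn; [lia|]. inversion Hs; subst; rewrite <- IHs; auto.
  - rewrite IH by (intros; apply Hf; auto with datatypes).
    transitivity (wsum (fun l => (if Nat.eq_dec c l then f c else 0) + count_occ Nat.eq_dec w l * f l) s).
    + rewrite wsum_add, wsum_indicator. f_equal.
      destruct (in_dec Nat.eq_dec c s) as [Hc|Hc].
      * rewrite (proj1 (NoDup_count_occ' Nat.eq_dec s) Hs c Hc); lia.
      * rewrite Hf by auto with datatypes. lia.
    + apply wsum_ext; intros l _; destruct (Nat.eq_dec c l); subst; cbn [Nat.mul]; lia.
Qed.

Section Iterates.
Variable sigma : nat -> list nat.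
Local Notation iter := (subst_iter sigma).

Lemma subst_iter_S k w : iter (S k) w = subst_word sigma (iter k w).
Proof. reflexivity. Qed.

Lemma subst_iter_nil k : iter k [] = [].
Proof. induction k; [|rewrite subst_iter_S, IHk]; reflexivity. Qed.

Lemma subst_iter_app k u v : iter k (u ++ v) = iter k u ++ iter k v.
Proof. induction k; [|rewrite !subst_iter_S, IHk; apply flat_map_app]; reflexivity. Qed.

Lemma subst_iter_add a b w : iter (a + b) w = iter a (iter b w).
Proof. apply Nat.iter_add. Qed.

Lemma subst_iter_succ_letter k c : iter (S k) [c] = iter k (sigma c).
Proof. rewrite <- Nat.add_1_r, subst_iter_add; cbn; rewrite app_nil_r; reflexivity. Qed.

Lemma subst_iter_additive (F : list nat -> nat) :
  F [] = 0 -> (forall u v, F (u ++ v) = F u + F v) ->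
  forall k w, F (iter k w) = wsum (fun c => F (iter k [c])) w.
Proof.
  intros F0 Fapp k w; induction w as [|c w IH]; cbn.
  - rewrite subst_iter_nil; exact F0.
  - rewrite <- IH, <- Fapp, <- subst_iter_app; reflexivity.
Qed.

Lemma subst_iter_Forall (P : nat -> Prop) :
  (forall c, P c -> Forall P (sigma c)) ->
  forall k w, Forall P w -> Forall P (iter k w).
Proof.
  intros HP k; induction k as [|k IH]; intros w Hw; [exact Hw|].
  apply Forall_flat_map, Forall_forall; intros c Hc.
  apply HP; exact (proj1 (Forall_forall _ _) (IH w Hw) c Hc).
Qed.

End Iterates.

Lemma letters_lt n w c : Forall (fun b => b < n) w -> In c w -> c < n.
Proof. intros H; exact (proj1 (Forall_forall _ _) H c). Qed.

Lemma letters_singleton n c : c < n -> Forall (fun b => b < n) [c].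
Proof. repeat constructor; assumption. Qed.

Definition countB (p : nat) (w : list nat) : nat :=
  wsum (fun c => if p <=? c then 1 else 0) w.

Lemma countB_app p u v : countB p (u ++ v) = countB p u + countB p v.
Proof. apply wsum_app. Qed.

Section BlockB.
Variables (N p : nat) (sigma : nat -> list nat).
Hypothesis Hwf : sub_wf N sigma.
Hypothesis HpN : p <= N.
Hypothesis Hzero : forall a b, p <= a < N -> b < p -> submat sigma a b = 0.
Local Notation iter := (subst_iter sigma).
Local Notation M := (submat sigma).
Local Notation letters n w := (Forall (fun b => b < n) w).

Lemma subst_iter_letters k w : letters N w -> letters N (iter k w).
Proof. apply subst_iter_Forall; intros c Hc; exact (proj2 (Hwf c Hc)). Qed.

Lemma subst_iter_letters_A k w : letters p w -> letters p (iter k w).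
Proof.
  apply subst_iter_Forall; intros c Hc; cbv beta in Hc; apply Forall_forall; intros b Hb.
  assert (HbN : b < N) by exact (letters_lt _ _ _ (proj2 (Hwf c ltac:(lia))) Hb).
  destruct (Nat.lt_ge_cases b p) as [|HbB]; [assumption|].
  exfalso; apply (count_occ_not_In Nat.eq_dec (sigma c) b); [exact (Hzero b c ltac:(lia) Hc) | exact Hb].
Qed.

Lemma countB_A w : letters p w -> countB p w = 0.
Proof.
  induction 1 as [|c w Hc _ IH]; [reflexivity|].
  unfold countB in *; cbn in *; rewrite IH; destruct (Nat.leb_spec p c); lia.
Qed.

Lemma count_occ_iter_A k c i : c < p -> p <= i -> count_occ Nat.eq_dec (iter k [c]) i = 0.
Proof.
  intros Hc Hi; apply count_occ_not_In; intros Hin.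
  pose proof (letters_lt _ _ _ (subst_iter_letters_A k [c] (letters_singleton _ _ Hc)) Hin); lia.
Qed.

Lemma countB_iter k w : countB p (iter k w) = wsum (fun c => countB p (iter k [c])) w.
Proof. apply subst_iter_additive; [reflexivity | apply countB_app]. Qed.

Lemma count_occ_iter k w i :
  count_occ Nat.eq_dec (iter k w) i = wsum (fun c => count_occ Nat.eq_dec (iter k [c]) i) w.
Proof. apply (subst_iter_additive _ (fun u => count_occ Nat.eq_dec u i)); [reflexivity|]. intros; apply count_occ_app. Qed.

Lemma wsum_letters_nsum f w : letters N w -> (forall c, c < p -> f c = 0) ->
  wsum f w = nsum p N (fun l => count_occ Nat.eq_dec w l * f l).
Proof.
  intros Hw Hf; rewrite nsum_wsum; apply wsum_count_occ; [apply seq_NoDup|].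
  intros c Hc HcB; apply Hf; rewrite in_seq in HcB.
  pose proof (letters_lt _ _ _ Hw Hc); lia.
Qed.

Lemma nsum_ext_B f g : (forall l, p <= l < N -> f l = g l) -> nsum p N f = nsum p N g.
Proof. intros H; rewrite !nsum_wsum; apply wsum_ext; intros l Hl; apply H; rewrite in_seq in Hl; lia. Qed.

Lemma blkpow_count_occ m i j : p <= i < N -> p <= j < N ->
  blkpow M p N m i j = count_occ Nat.eq_dec (iter m [j]) i.
Proof.
  revert j; induction m as [|m IH]; intros j Hi Hj; cbn [blkpow].
  - cbn; destruct (Nat.eqb_spec i j), (Nat.eq_dec j i); congruence.
  - rewrite subst_iter_succ_letter, count_occ_iter.
    rewrite (wsum_letters_nsum (fun c => count_occ Nat.eq_dec (iter m [c]) i)).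
    + apply nsum_ext_B; intros l Hl; rewrite IH by lia; unfold submat; lia.
    + apply Hwf; lia.
    + intros c Hc; apply count_occ_iter_A; lia.
Qed.

Lemma countB_nsum w : letters N w -> countB p w = nsum p N (count_occ Nat.eq_dec w).
Proof.
  intros Hw; unfold countB; rewrite wsum_letters_nsum by
    (auto; intros c Hc; destruct (Nat.leb_spec p c); lia).
  apply nsum_ext_B; intros l Hl; destruct (Nat.leb_spec p l); lia.
Qed.

Lemma blk_norm_countB m : blk_norm M p N m = nsum p N (fun j => countB p (iter m [j])).
Proof.
  unfold blk_norm; rewrite nsum_swap; apply nsum_ext_B; intros j Hj.
  rewrite countB_nsum, !nsum_wsum by (apply subst_iter_letters, letters_singleton; lia).
  apply wsum_ext; intros i Hi; rewrite in_seq in Hi; apply blkpow_count_occ; lia.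
Qed.

Lemma countB_le_blk_norm m c : c < N -> countB p (iter m [c]) <= blk_norm M p N m.
Proof.
  intros Hc; destruct (Nat.lt_ge_cases c p).
  - rewrite countB_A; [lia|]. apply subst_iter_letters_A, letters_singleton; lia.
  - rewrite blk_norm_countB, nsum_wsum.
    apply (wsum_In_le (fun j => countB p (iter m [j]))), in_seq; lia.
Qed.

Section Primitive.
Variable k : nat.
Hypothesis Hk : forall i j, p <= i < N -> p <= j < N -> 0 < blkpow M p N k i j.

Lemma countB_le_count_occ_iter W l : p <= l < N -> letters N W ->
  countB p W <= count_occ Nat.eq_dec (iter k W) l.
Proof.
  intros Hl HW; rewrite count_occ_iter; apply wsum_le; intros c Hc.
  pose proof (letters_lt _ _ _ HW Hc).
  destruct (Nat.leb_spec p c); [|lia]. rewrite <- blkpow_count_occ by lia; apply Hk; lia.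
Qed.

Lemma countB_mul_blk_norm_le W n : letters N W ->
  countB p W * blk_norm M p N n <= countB p (iter n (iter k W)).
Proof.
  intros HW.
  rewrite (countB_iter n (iter k W)), (wsum_letters_nsum _ (iter k W)), blk_norm_countB,
    !nsum_wsum, <- wsum_mul_l.
  - apply wsum_le; intros l Hl; rewrite in_seq in Hl.
    apply Nat.mul_le_mono_r, countB_le_count_occ_iter; [lia | exact HW].
  - apply subst_iter_letters, HW.
  - intros c Hc; apply countB_A, subst_iter_letters_A, letters_singleton, Hc.
Qed.

Lemma blk_norm_supermult m n : blk_norm M p N m * blk_norm M p N n <= blk_norm M p N (m + k + n).
Proof.
  rewrite (blk_norm_countB (m + k + n)), (blk_norm_countB m), !nsum_wsum.
  rewrite Nat.mul_comm, <- wsum_mul_l; apply wsum_le; intros j Hj; rewrite in_seq in Hj.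
  replace (m + k + n) with (n + (k + m)) by lia; rewrite !subst_iter_add, Nat.mul_comm.
  apply countB_mul_blk_norm_le, subst_iter_letters, letters_singleton; lia.
Qed.

End Primitive.
End BlockB.

Local Open Scope R_scope.

Lemma Rpower_pow_inv x n : 0 < x -> (0 < n)%nat -> Rpower (x ^ n) (/ INR n) = x.
Proof.
  intros Hx Hn; rewrite <- Rpower_pow, Rpower_mult, Rinv_r by (auto; apply not_0_INR; lia).
  apply Rpower_1, Hx.
Qed.

Lemma pow_Rpower_inv x n : 0 < x -> (0 < n)%nat -> Rpower x (/ INR n) ^ n = x.
Proof.
  intros Hx Hn; assert (0 < Rpower x (/ INR n)) by apply exp_pos.
  rewrite <- Rpower_pow, Rpower_mult, Rinv_l by (assumption || (apply not_0_INR; lia)).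
  apply Rpower_1, Hx.
Qed.

Lemma supermult_iterate (a : nat -> nat) k m j :
  (forall m n, a m * a n <= a (m + k + n))%nat -> (a m ^ S j <= a (m + j * (m + k)))%nat.
Proof.
  intros Ha; induction j as [|j IH]; [cbn; rewrite Nat.mul_1_r, Nat.add_0_r; lia|].
  replace (m + S j * (m + k))%nat with (m + k + (m + j * (m + k)))%nat by lia.
  eapply Nat.le_trans; [|apply Ha]. cbn [Nat.pow]. apply Nat.mul_le_mono_l, IH.
Qed.

(* A supermultiplicative sequence (up to a gap k) lies below every power of its Gelfand limit:
   if a m exceeded r^(m+k), its growth rate along m + j (m+k) would stay above r. *)
Lemma supermult_le_limit (a : nat -> nat) (k : nat) (r : R) :
  (0 < k)%nat -> 0 <= r ->
  (forall m n, a m * a n <= a (m + k + n))%nat ->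
  Un_cv (fun j => Rpower (INR (a (S j))) (/ INR (S j))) r ->
  forall m, INR (a m) <= r ^ (m + k).
Proof.
  intros Hk Hr Ha Hcv m.
  destruct (Rle_lt_dec (INR (a m)) (r ^ (m + k))) as [|Hgt]; [assumption|exfalso].
  set (d := (m + k)%nat) in *.
  assert (Hd : (0 < d)%nat) by (unfold d; lia).
  assert (Ham : 1 <= INR (a m)).
  { pose proof (pow_le r d Hr). destruct (a m); [cbn in Hgt; lra|].
    rewrite S_INR; pose proof (pos_INR n); lra. }
  set (rho := Rpower (INR (a m)) (/ INR d)).
  assert (Hrho_d : rho ^ d = INR (a m)) by (apply pow_Rpower_inv; [lra | exact Hd]).
  assert (Hrho1 : 1 <= rho).
  { unfold rho; replace 1 with (Rpower 1 (/ INR d)) at 1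
      by (unfold Rpower; rewrite ln_1, Rmult_0_r; apply exp_0).
    apply Rle_Rpower_l; [left; apply Rinv_0_lt_compat, lt_0_INR, Hd | lra]. }
  assert (Hr_rho : r < rho).
  { destruct (Rle_lt_dec rho r) as [Hle|]; [|assumption].
    pose proof (pow_incr rho r d ltac:(lra)); lra. }
  assert (Hgrowth : forall j : nat, rho <= Rpower (INR (a (m + S j * d)%nat)) (/ INR (m + S j * d))).
  { intros j.
    assert (Hs : (0 < m + S j * d)%nat) by nia.
    rewrite <- (Rpower_pow_inv rho (m + S j * d)%nat) at 1 by (exact Hs || lra).
    apply Rle_Rpower_l; [left; apply Rinv_0_lt_compat, lt_0_INR, Hs|split; [apply pow_lt; lra|]].
    eapply Rle_trans; [|apply le_INR, supermult_iterate, Ha].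
    rewrite pow_INR, <- Hrho_d, <- pow_mult; apply Rle_pow; [exact Hrho1|nia]. }
  destruct (Hcv (rho - r) ltac:(lra)) as [J HJ].
  set (s := (m + S J * d)%nat).
  specialize (HJ (s - 1)%nat ltac:(unfold s; nia)).
  replace (S (s - 1)) with s in HJ by (unfold s; nia).
  unfold Rdist in HJ; apply Rabs_def2 in HJ.
  specialize (Hgrowth J); fold s in Hgrowth; lra.
Qed.

Lemma countB_subst_iter_growth N p (sigma : nat -> list nat) rhoB :
  sub_wf N sigma -> (p <= N)%nat ->
  (forall a b, (p <= a < N)%nat -> (b < p)%nat -> submat sigma a b = 0%nat) ->
  blk_primitive (submat sigma) p N -> blk_spectral_radius (submat sigma) p N rhoB -> 0 <= rhoB ->
  exists k, forall m c, (c < N)%nat -> INR (countB p (subst_iter sigma m [c])) <= rhoB ^ (m + k).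
Proof.
  intros Hwf HpN Hzero [_ [k [Hk0 Hk]]] HrhoB Hr; exists k; intros m c Hc.
  eapply Rle_trans; [apply le_INR, (countB_le_blk_norm N p sigma Hwf HpN Hzero m c Hc)|].
  apply (supermult_le_limit _ k); [exact Hk0 | exact Hr | | exact HrhoB].
  intros; apply blk_norm_supermult; assumption.
Qed.

Fixpoint rsum (f : nat -> R) (w : list nat) : R :=
  match w with [] => 0 | c :: w' => f c + rsum f w' end.

Lemma rsum_app f u v : rsum f (u ++ v) = rsum f u + rsum f v.
Proof. induction u as [|c u IH]; cbn; [|rewrite IH]; ring. Qed.

Lemma rsum_ext f g w : (forall c, In c w -> f c = g c) -> rsum f w = rsum g w.
Proof. induction w as [|c w IH]; intros H; cbn; [|rewrite H, IH]; auto with datatypes. Qed.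

Lemma rsum_mul_r f a w : rsum (fun c => f c * a) w = rsum f w * a.
Proof. induction w as [|c w IH]; cbn; [|rewrite IH]; ring. Qed.

Lemma INR_wsum f w : INR (wsum f w) = rsum (fun c => INR (f c)) w.
Proof. induction w as [|c w IH]; cbn [wsum rsum]; [reflexivity|]. rewrite plus_INR, IH; reflexivity. Qed.

Lemma Un_cv_const c : Un_cv (fun _ => c) c.
Proof. intros e He; exists 0%nat; intros; unfold Rdist; rewrite Rminus_diag, Rabs_R0; exact He. Qed.

Lemma Un_cv_rsum (u : nat -> nat -> R) (l : nat -> R) w :
  (forall c, In c w -> Un_cv (u c) (l c)) -> Un_cv (fun n => rsum (fun c => u c n) w) (rsum l w).
Proof.
  induction w as [|c w IH]; intros H; cbn; [apply Un_cv_const|].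
  apply CV_plus; [apply H | apply IH]; auto with datatypes.
Qed.

(* Comparing sigma^(k+1)(i) with the sigma^k-images of the letters of sigma(i) and letting
   k -> oo: the normalised lengths all tend to 1, so xi is a left eigenvector for lam. *)
Lemma lengths_left_eigenvector N (sigma : nat -> list nat) (xi : nat -> R) (lam : R) :
  sub_wf N sigma -> 0 < lam ->
  (forall i, (i < N)%nat -> 0 < xi i /\
     Un_cv (fun k => INR (length (subst_iter sigma k [i])) / (xi i * lam ^ k)) 1) ->
  forall i, (i < N)%nat -> rsum xi (sigma i) = lam * xi i.
Proof.
  intros Hwf Hlam Hxi i Hi; destruct (Hxi i Hi) as [Hxii Hcv].
  set (f c k := INR (length (subst_iter sigma k [c])) / (xi c * lam ^ k)).
  set (g c := xi c / (lam * xi i)).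
  assert (Hletters : forall c, In c (sigma i) -> 0 < xi c /\ Un_cv (f c) 1)
    by (intros c Hc; apply Hxi, (letters_lt _ _ _ (proj2 (Hwf i Hi)) Hc)).
  assert (Hrec : forall k, f i (S k) = rsum (fun c => g c * f c k) (sigma i)).
  { intros k; unfold f.
    rewrite subst_iter_succ_letter, (subst_iter_additive sigma (@length nat)), INR_wsum
      by (reflexivity || apply length_app).
    unfold Rdiv; rewrite <- rsum_mul_r; apply rsum_ext; intros c Hc.
    destruct (Hletters c Hc) as [Hxic _]; unfold g; cbn [pow].
    field; repeat split; try lra; apply pow_nonzero; lra. }
  assert (Hlim : rsum (fun c => g c * 1) (sigma i) = 1).
  { apply (UL_sequence (fun k => f i (S k))).
    - apply (Un_cv_ext (fun k => rsum (fun c => g c * f c k) (sigma i))); [intros; symmetry; apply Hrec|].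
      apply Un_cv_rsum; intros c Hc; apply CV_mult; [apply Un_cv_const | apply Hletters, Hc].
    - apply (Un_cv_ext (fun k => f i (k + 1)%nat)); [intros k; rewrite Nat.add_1_r; reflexivity|].
      apply CV_shift', Hcv. }
  unfold g in Hlim; rewrite (rsum_ext _ (fun c => xi c * / (lam * xi i))), rsum_mul_r in Hlim
    by (intros; unfold Rdiv; ring).
  apply (Rmult_eq_compat_r (lam * xi i)) in Hlim.
  rewrite Rmult_assoc, Rinv_l, Rmult_1_r, Rmult_1_l in Hlim by (apply Rgt_not_eq, Rmult_lt_0_compat; lra).
  exact Hlim.
Qed.

Section Layout.
Variable xi : nat -> R.

Lemma lay_app x u v : lay xi x (u ++ v) = lay xi x u ++ lay xi (x + rsum xi u) v.
Proof.
  revert x; induction u as [|c u IH]; intros x; cbn; [rewrite Rplus_0_r; reflexivity|].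
  rewrite IH, Rplus_assoc; reflexivity.
Qed.

Lemma translate_lay u x w : translate u (lay xi x w) = lay xi (x + u) w.
Proof.
  unfold translate; revert x; induction w as [|c w IH]; intros x; cbn; [reflexivity|].
  rewrite IH; f_equal; [f_equal; ring | f_equal; ring].
Qed.

Lemma lay_In_bounds N x w T : (forall c, (c < N)%nat -> 0 < xi c) ->
  Forall (fun b => b < N)%nat w -> In T (lay xi x w) ->
  x <= tile_left xi T /\ tile_right xi T <= x + rsum xi w.
Proof.
  intros Hxi Hw; revert x; induction Hw as [|c w Hc Hw IH]; intros x HT; [contradiction|].
  assert (Hw0 : 0 <= rsum xi w).
  { clear -Hw Hxi; induction Hw as [|b w Hb _ IH]; cbn; [lra|]. pose proof (Hxi b Hb); lra. }
  pose proof (Hxi c Hc).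
  destruct HT as [<-|HT]; unfold tile_left, tile_right in *; cbn in *.
  - lra.
  - destruct (IH _ HT); lra.
Qed.

Section Substitution.
Variables (N : nat) (sigma : nat -> list nat) (lam : R).
Hypothesis Hwf : sub_wf N sigma.
Hypothesis Heig : forall c, (c < N)%nat -> rsum xi (sigma c) = lam * xi c.
Local Notation iter := (subst_iter sigma).

Lemma G_patch_lay x w : Forall (fun b => b < N)%nat w ->
  G_patch sigma xi lam (lay xi x w) = lay xi (lam * x) (subst_word sigma w).
Proof.
  intros Hw; revert x; induction Hw as [|c w Hc _ IH]; intros x; [reflexivity|].
  unfold G_patch, subst_word in *; cbn; rewrite IH, lay_app, Heig by exact Hc.
  unfold G_tile; cbn; f_equal; f_equal; field.
Qed.

Lemma G_iter_prototile n a : (a < N)%nat ->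
  G_iter sigma xi lam n [(a, 0)] = lay xi (lam ^ n * (- xi a / 2)) (iter n [a]).
Proof.
  intros Ha; induction n as [|n IH].
  - cbn; f_equal; f_equal; field.
  - change (G_iter sigma xi lam (S n) [(a, 0)]) with (G_patch sigma xi lam (G_iter sigma xi lam n [(a, 0)])).
    rewrite IH, G_patch_lay, <- subst_iter_S; [f_equal; cbn [pow]; ring|].
    apply (subst_iter_letters N sigma Hwf), letters_singleton, Ha.
Qed.

Lemma rsum_subst_word w : Forall (fun b => b < N)%nat w ->
  rsum xi (subst_word sigma w) = lam * rsum xi w.
Proof.
  induction 1 as [|c w Hc _ IH]; [cbn; ring|].
  unfold subst_word in *; cbn; rewrite rsum_app, IH, Heig by exact Hc; ring.
Qed.

Lemma rsum_subst_iter m w : Forall (fun b => b < N)%nat w ->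
  rsum xi (iter m w) = lam ^ m * rsum xi w.
Proof.
  intros Hw; induction m as [|m IH]; [cbn; ring|].
  rewrite subst_iter_S, rsum_subst_word, IH by (apply (subst_iter_letters N sigma Hwf), Hw).
  cbn [pow]; ring.
Qed.

End Substitution.
End Layout.

Definition tile_eq_dec (T1 T2 : tile) : {T1 = T2} + {T1 <> T2}.
Proof. decide equality; [apply Req_dec_T | apply Nat.eq_dec]. Defined.

Section Counting.
Variables (N p : nat) (xi : nat -> R).

Lemma count_B_le_weaken Tg t b b' : b <= b' -> count_B_le N p xi Tg t b -> count_B_le N p xi Tg t b'.
Proof. intros Hb H l Hnd Hl; specialize (H l Hnd Hl); lra. Qed.

Lemma count_B_le_local Tg t b :
  (forall l, (forall T, In T l -> Tg T) ->
     exists P, (forall T, In T l -> In T P) /\ count_B_le N p xi (fun T => In T P) t b) ->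
  count_B_le N p xi Tg t b.
Proof.
  intros H l Hnd Hl; destruct (H l (fun T HT => proj1 (Hl T HT))) as [P [HlP HP]].
  apply HP; [exact Hnd|]; intros T HT; split; [apply HlP, HT | apply Hl, HT].
Qed.

Lemma count_B_le_empty Tg t :
  (forall T, Tg T -> (fst T < N)%nat -> 0 <= tile_left xi T -> tile_right xi T <= t -> False) ->
  count_B_le N p xi Tg t 0.
Proof.
  intros H [|T l] Hnd Hl; [cbn; lra|].
  destruct (Hl T (or_introl eq_refl)) as [HT [HB [HL HR]]]; exfalso; eapply H; eauto; lia.
Qed.

Lemma count_B_le_app P1 P2 t b1 b2 :
  count_B_le N p xi (fun T => In T P1) t b1 -> count_B_le N p xi (fun T => In T P2) t b2 ->
  count_B_le N p xi (fun T => In T (P1 ++ P2)) t (b1 + b2).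
Proof.
  intros H1 H2 l Hnd Hl.
  set (inP1 T := if in_dec tile_eq_dec T P1 then true else false).
  rewrite <- (filter_length inP1 l), plus_INR.
  apply Rplus_le_compat; [apply H1 | apply H2]; try apply NoDup_filter, Hnd;
    intros T HT; apply filter_In in HT; destruct HT as [HT Hin];
    destruct (Hl T HT) as [HP HT']; (split; [|exact HT']);
    unfold inP1 in Hin; destruct (in_dec tile_eq_dec T P1); try discriminate; [assumption|].
  apply in_app_or in HP; tauto.
Qed.

Lemma countB_lay x w : length (filter (fun T => p <=? fst T)%nat (lay xi x w)) = countB p w.
Proof.
  revert x; induction w as [|c w IH]; intros x; [reflexivity|].
  unfold countB in *; cbn; rewrite <- (IH (x + xi c)); destruct (p <=? c)%nat; reflexivity.
Qed.

Lemma count_B_le_lay x w t : count_B_le N p xi (fun T => In T (lay xi x w)) t (INR (countB p w)).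
Proof.
  intros l Hnd Hl; apply le_INR.
  rewrite <- (countB_lay x); apply NoDup_incl_length; [exact Hnd|]; intros T HT; apply filter_In.
  destruct (Hl T HT) as [HT' [HB _]]; split; [exact HT'|]; apply Nat.leb_le; lia.
Qed.

End Counting.

Section Blocks.
Variables (N p : nat) (sigma : nat -> list nat) (xi : nat -> R).
Hypothesis Hwf : sub_wf N sigma.
Hypothesis Hxi : forall c, (c < N)%nat -> 0 < xi c.
Local Notation iter := (subst_iter sigma).
Local Notation letters w := (Forall (fun b => b < N)%nat w).

Lemma count_B_le_outside x w t : letters w -> t <= x \/ x + rsum xi w <= 0 ->
  count_B_le N p xi (fun T => In T (lay xi x w)) t 0.
Proof.
  intros Hw Hout; apply count_B_le_empty; intros T HT HTN HL HR.
  destruct (lay_In_bounds xi N x w T Hxi Hw HT).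
  pose proof (Hxi _ HTN); unfold tile_left, tile_right in *; lra.
Qed.

Lemma count_B_le_nil x t : count_B_le N p xi (fun T => In T (lay xi x [])) t 0.
Proof. apply count_B_le_empty; intros T []. Qed.

Lemma lay_subst_iter_cons m x c u :
  lay xi x (iter m (c :: u)) = lay xi x (iter m [c]) ++ lay xi (x + rsum xi (iter m [c])) (iter m u).
Proof. rewrite <- lay_app, <- subst_iter_app; reflexivity. Qed.

Variables (m : nat) (t Cm : R).
Hypothesis HCm : 0 <= Cm.
Hypothesis Hlong : forall c, (c < N)%nat -> t < rsum xi (iter m [c]).
Hypothesis Hfew : forall c, (c < N)%nat -> INR (countB p (iter m [c])) <= Cm.

Lemma count_B_le_iter_nonneg x u : 0 <= x -> letters u ->
  count_B_le N p xi (fun T => In T (lay xi x (iter m u))) t Cm.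
Proof.
  intros Hx Hu; destruct Hu as [|c u Hc Hu].
  - rewrite subst_iter_nil; apply (count_B_le_weaken _ _ _ _ _ 0); [exact HCm | apply count_B_le_nil].
  - rewrite lay_subst_iter_cons, <- (Rplus_0_r Cm); apply count_B_le_app.
    + apply (count_B_le_weaken _ _ _ _ _ _ _ (Hfew c Hc)), count_B_le_lay.
    + apply count_B_le_outside; [apply (subst_iter_letters N sigma Hwf), Hu |].
      left; pose proof (Hlong c Hc); lra.
Qed.

(* Blocks longer than the window: only the block straddling 0 and its successor can meet [0, t]. *)
Lemma count_B_le_iter u : letters u ->
  forall x, count_B_le N p xi (fun T => In T (lay xi x (iter m u))) t (2 * Cm).
Proof.
  induction 1 as [|c u Hc Hu IH]; intros x.
  - rewrite subst_iter_nil; apply (count_B_le_weaken _ _ _ _ _ 0); [lra | apply count_B_le_nil].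
  - rewrite lay_subst_iter_cons.
    destruct (Rle_lt_dec (x + rsum xi (iter m [c])) 0) as [Hneg|Hpos].
    + rewrite <- (Rplus_0_l (2 * Cm)); apply count_B_le_app; [|apply IH].
      apply count_B_le_outside; [apply (subst_iter_letters N sigma Hwf), letters_singleton, Hc | right; exact Hneg].
    + replace (2 * Cm) with (Cm + Cm) by ring; apply count_B_le_app.
      * apply (count_B_le_weaken _ _ _ _ _ _ _ (Hfew c Hc)), count_B_le_lay.
      * apply count_B_le_iter_nonneg; [lra | exact Hu].
Qed.

End Blocks.

Section Supertiles.
Variables (N p : nat) (sigma : nat -> list nat) (xi : nat -> R) (lam rhoB e : R) (k : nat).
Hypothesis Hwf : sub_wf N sigma.
Hypothesis Hxi : forall c, (c < N)%nat -> 0 < xi c.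
Hypothesis Heig : forall c, (c < N)%nat -> rsum xi (sigma c) = lam * xi c.
Hypothesis Hlam : 0 <= lam.
Hypothesis He : forall c, (c < N)%nat -> e <= xi c.
Hypothesis HrhoB : 1 <= rhoB.
Hypothesis Hgrowth : forall m c, (c < N)%nat ->
  INR (countB p (subst_iter sigma m [c])) <= rhoB ^ (m + k).

Lemma count_B_le_supertile t m n a x : (a < N)%nat -> t < lam ^ m * e ->
  count_B_le N p xi (fun T => In T (lay xi x (subst_iter sigma n [a]))) t (2 * rhoB ^ (m + k)).
Proof.
  intros Ha Ht; pose proof (pow_le rhoB (m + k) ltac:(lra)).
  destruct (le_lt_dec m n) as [Hmn|Hnm].
  - replace n with (m + (n - m))%nat by lia; rewrite subst_iter_add.
    apply count_B_le_iter; [exact Hwf | exact Hxi | lra | | intros; apply Hgrowth; assumption |].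
    + intros c Hc; rewrite rsum_subst_iter with (N := N) (lam := lam) by auto using letters_singleton.
      cbn; rewrite Rplus_0_r; eapply Rlt_le_trans; [exact Ht|].
      apply Rmult_le_compat_l; [apply pow_le; lra | auto].
    + apply (subst_iter_letters N sigma Hwf), letters_singleton, Ha.
  - eapply count_B_le_weaken; [|apply count_B_le_lay].
    eapply Rle_trans; [apply Hgrowth, Ha|].
    pose proof (Rle_pow rhoB (n + k) (m + k) HrhoB ltac:(lia)); lra.
Qed.

End Supertiles.

Lemma exists_lower_bound N (xi : nat -> R) : (forall c, (c < N)%nat -> 0 < xi c) ->
  exists e, 0 < e /\ forall c, (c < N)%nat -> e <= xi c.
Proof.
  induction N as [|N IH]; intros H; [exists 1; split; [lra | intros; lia]|].
  destruct IH as [e [He He']]; [intros; apply H; lia|].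
  exists (Rmin e (xi N)); split; [apply Rmin_pos; auto|].
  intros c Hc; destruct (Nat.eq_dec c N) as [->|]; [apply Rmin_r|].
  eapply Rle_trans; [apply Rmin_l | apply He'; lia].
Qed.

Lemma exists_pow_bracket lam e t : 1 < lam -> 0 < e -> e <= t ->
  exists m, lam ^ m * e <= t < lam ^ S m * e.
Proof.
  intros Hl He Ht; destruct (INR_archimed ((lam - 1) * e) t ltac:(nra)) as [n Hn].
  assert (Hb : t < lam ^ n * e).
  { pose proof (poly n (lam - 1) ltac:(lra)); replace (1 + (lam - 1)) with lam in * by ring; nra. }
  clear Hn; induction n as [|n IH]; [cbn in Hb; lra|].
  destruct (Rle_lt_dec (lam ^ n * e) t); [exists n; split; assumption | apply IH; assumption].
Qed.

(* rB^m = (lam^m)^alpha for the exponent alpha = log rB / log lam. *)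
Lemma pow_le_Rpower_scaled lam rB e t m : 1 < lam -> 1 <= rB -> 0 < e -> lam ^ m * e <= t ->
  rB ^ m <= Rpower (/ e) (ln rB / ln lam) * Rpower t (ln rB / ln lam).
Proof.
  intros Hl HrB He Ht.
  assert (Hlnl : 0 < ln lam) by (rewrite <- ln_1; apply ln_increasing; lra).
  assert (Halpha : 0 <= ln rB / ln lam).
  { unfold Rdiv; apply Rmult_le_pos; [|left; apply Rinv_0_lt_compat, Hlnl].
    rewrite <- ln_1; destruct HrB as [HrB|<-]; [left; apply ln_increasing|]; lra. }
  assert (Hlm : 0 < lam ^ m) by (apply pow_lt; lra).
  assert (Hie : 0 < / e) by (apply Rinv_0_lt_compat, He).
  assert (Ht0 : 0 < t) by nra.
  replace (rB ^ m) with (Rpower (lam ^ m) (ln rB / ln lam)).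
  - rewrite Rpower_mult_distr by assumption.
    apply Rle_Rpower_l; [exact Halpha | split; [exact Hlm|]].
    apply (Rmult_le_reg_r e); [exact He|]; replace (/ e * t * e) with t by (field; lra); exact Ht.
  - rewrite <- !Rpower_pow by lra; unfold Rpower; rewrite ln_exp; f_equal; field; lra.
Qed.

Theorem mainTheorem10
  (N p : nat) (sigma : nat -> list nat) (xi : nat -> R) (rhoA rhoB : R)
  (Hwf : sub_wf N sigma)
  (Hp : (0 < p < N)%nat)
  (Hzero : forall a b, (p <= a < N)%nat -> (b < p)%nat -> submat sigma a b = 0%nat)
  (HC : exists a b, (a < p)%nat /\ (p <= b < N)%nat /\ submat sigma a b <> 0%nat)
  (HA : blk_primitive (submat sigma) 0 p)
  (HB : blk_primitive (submat sigma) p N)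
  (HrhoA : blk_spectral_radius (submat sigma) 0 p rhoA)
  (HrhoB : blk_spectral_radius (submat sigma) p N rhoB)
  (Hrho : rhoA > rhoB /\ rhoB > 1)
  (Hxi : forall i, (i < N)%nat ->
     0 < xi i /\
     Un_cv (fun k => INR (length (subst_iter sigma k [i])) / (xi i * rhoA ^ k)) 1) :
  exists K, K > 0 /\
    forall Tg : tile -> Prop, in_tiling_space N sigma xi rhoA Tg ->
      forall t, t > 0 ->
        count_B_le N p xi Tg t (K * Rpower t (ln rhoB / ln rhoA)).
Proof.
  destruct Hrho as [HAB HB1].
  destruct (countB_subst_iter_growth N p sigma rhoB Hwf ltac:(lia) Hzero HB HrhoB ltac:(lra))
    as [k Hgrowth].
  assert (Hxipos : forall c, (c < N)%nat -> 0 < xi c) by (intros; apply Hxi; assumption).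
  pose proof (lengths_left_eigenvector N sigma xi rhoA Hwf ltac:(lra) Hxi) as Heig.
  destruct (exists_lower_bound N xi Hxipos) as [e [He0 He]].
  set (alpha := ln rhoB / ln rhoA).
  set (K := 2 * rhoB ^ S k * Rpower (/ e) alpha).
  assert (HK : 0 < K) by (apply Rmult_lt_0_compat; [pose proof (pow_lt rhoB (S k) ltac:(lra)); lra | apply exp_pos]).
  exists K; split; [exact HK|].
  intros Tg [_ Hpatches] t Ht.
  destruct (Rlt_le_dec t e) as [Hte|Het].
  - apply (count_B_le_weaken _ _ _ _ _ 0); [|apply count_B_le_empty; intros T _ HT HL HR].
    + left; apply Rmult_lt_0_compat; [exact HK | apply exp_pos].
    + pose proof (He _ HT); unfold tile_left, tile_right in *; lra.
  - destruct (exists_pow_bracket rhoA e t) as [m [Hm Hm']]; [lra | exact He0 | exact Het |].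
    apply (count_B_le_weaken _ _ _ _ _ (2 * rhoB ^ (S m + k))).
    + pose proof (pow_le_Rpower_scaled rhoA rhoB e t m ltac:(lra) ltac:(lra) He0 Hm) as Hpow.
      pose proof (pow_lt rhoB (S k) ltac:(lra)).
      fold alpha in Hpow; replace (S m + k)%nat with (m + S k)%nat by lia; rewrite pow_add; unfold K; nra.
    + apply count_B_le_local; intros l Hl; destruct (Hpatches l Hl) as [a [n [u [Ha Hin]]]].
      exists (translate u (G_iter sigma xi rhoA n [(a, 0)])); split; [exact Hin|].
      rewrite (G_iter_prototile xi N sigma rhoA Hwf Heig n a Ha), translate_lay.
      apply count_B_le_supertile with (lam := rhoA) (e := e); auto; lra.
Qed.
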